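(* Let $n\ge 1$ be an integer. The game value of \textsc{Snort} played on the star $K_{1,n}$ whose centre is tinted blue (and whose leaves are untinted) is $\{\, n \mid * \,\}$ if $n$ is even, and $\{\, n \mid 0 \,\}$ if $n$ is odd.
   Context: \textsc{Snort} is a two-player normal-play combinatorial game (the player unable to move loses) between Left (blue) and Right (red), played on a finite simple graph in which each vertex may be tinted blue, tinted red, or untinted. Left may move on any vertex not tinted red; Right may move on any vertex not tinted blue. A move on vertex $v$ deletes $v$ and tints all neighbours of $v$ in the mover's colour; any vertex that thereby becomes tinted in both colours is deleted. (This is equivalent to the original game in which players alternately colour vertices and may not colour a vertex adjacent to an opponent-coloured vertex.) Game values are in the standard sense of combinatorial game theory: $\{A \mid B\}$ denotes the game with Left options $A$ and Right options $B$, $0=\{\,\mid\,\}$, $*=\{0\mid 0\}$, and equality is the usual equality of games. $K_{1,n}$ is the star with one centre vertex adjacent to $n$ leaves. *)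

From mathcomp Require Import all_boot.
Set Implicit Arguments. Unset Strict Implicit. Unset Printing Implicit Defensive.

Inductive game : Type := Game of seq game & seq game.

Definition leftopts (G : game) : seq game := let: Game L _ := G in L.
Definition rightopts (G : game) : seq game := let: Game _ R := G in R.

(** [le_pair G H] = (G <= H, H <= G), with the standard recursive definition
    G <= H  iff  no Left option G^L satisfies H <= G^L and
                 no Right option H^R satisfies H^R <= G. *)
Fixpoint le_pair (G : game) : game -> bool * bool :=
  let: Game GL GR := G in
  fix leH (H : game) : bool * bool :=
    let: Game HL HR := H in
    (
      all (fun gl => ~~ (le_pair gl (Game HL HR)).2) GL
      && all (fun hr => ~~ (leH hr).2) HR,
      all (fun hl => ~~ (leH hl).1) HL
      && all (fun gr => ~~ (le_pair gr (Game HL HR)).1) GR ).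

Definition game_le (G H : game) : bool := (le_pair G H).1.

Definition game_eq (G H : game) : Prop := game_le G H /\ game_le H G.

Definition zero_game : game := Game [::] [::].
Definition star_game : game := Game [:: zero_game] [:: zero_game].
Fixpoint nat_game (n : nat) : game :=
  if n is m.+1 then Game [:: nat_game m] [::] else zero_game.

Inductive tint := Untinted | BlueT | RedT.
Definition tint_eqb (a b : tint) : bool :=
  match a, b with
  | Untinted, Untinted | BlueT, BlueT | RedT, RedT => true
  | _, _ => false
  end.

Inductive player := LeftP | RightP.
Definition own_tint (p : player) : tint := if p is LeftP then BlueT else RedT.
Definition opp_tint (p : player) : tint := if p is LeftP then RedT else BlueT.

(** A position on a graph with (symmetric, irreflexive) adjacency [e : rel nat]:
    the list [V] of remaining vertices and a tinting [c]. *)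

Definition legal (p : player) (c : nat -> tint) (v : nat) : bool :=
  ~~ tint_eqb (c v) (opp_tint p).

(** Moving on [v]: delete [v], tint its neighbours in the mover's colour,
    deleting those neighbours that were tinted in the opponent's colour
    (they become tinted in both colours). *)
Definition move (e : rel nat) (p : player) (V : seq nat) (c : nat -> tint)
    (v : nat) : seq nat * (nat -> tint) :=
  ( [seq u <- V | (u != v) && ~~ (e v u && tint_eqb (c u) (opp_tint p))],
    fun u => if e v u then own_tint p else c u ).

(** Game tree of Snort, with fuel (each move deletes at least one vertex). *)
Fixpoint snort_aux (k : nat) (e : rel nat) (V : seq nat) (c : nat -> tint)
    : game :=
  if k is k'.+1 then
    Game
      [seq let m := move e LeftP V c v in snort_aux k' e m.1 m.2
         | v <- V & legal LeftP c v]
      [seq let m := move e RightP V c v in snort_aux k' e m.1 m.2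
         | v <- V & legal RightP c v]
  else zero_game.

Definition snort (e : rel nat) (V : seq nat) (c : nat -> tint) : game :=
  snort_aux (size V) e V c.

(** The star K_{1,n}: vertices 0..n, centre 0, leaves 1..n. *)
Definition star_verts (n : nat) : seq nat := iota 0 n.+1.
Definition star_rel : rel nat :=
  fun u v => ((u == 0) && (v != 0)) || ((v == 0) && (u != 0)).
Definition star_blue_centre : nat -> tint :=
  fun u => if u == 0 then BlueT else Untinted.

From HB Require Import structures.
From mathcomp Require Import all_boot zify.

Set Implicit Arguments.
Unset Strict Implicit.
Unset Printing Implicit Defensive.

(* Left's move on the blue centre tints every leaf blue, leaving n isolated
   blue vertices: the integer n.  Left's move on a leaf leaves a blue-centred
   star with n - 1 leaves, whose value is at most n, so this option is
   dominated.  Right cannot move on the centre, and Right's move on a leaf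
   tints the centre red as well, deleting it: what is left are n - 1 isolated
   untinted vertices, a sum of n - 1 copies of *, i.e. 0 or * by parity. *)

(* Encoding games as trees only serves to give [game] a decidable equality,
   so that option lists can be reasoned about with [\in]. *)
Fixpoint tree_of_game (G : game) : GenTree.tree unit :=
  let: Game L R := G in
  GenTree.Node 0 [:: GenTree.Node 0 (map tree_of_game L);
                     GenTree.Node 0 (map tree_of_game R)].

Fixpoint game_of_tree (t : GenTree.tree unit) : game :=
  if t is GenTree.Node _ [:: GenTree.Node _ L; GenTree.Node _ R] then
    Game (map game_of_tree L) (map game_of_tree R)
  else zero_game.

Fixpoint tree_of_gameK (G : game) : game_of_tree (tree_of_game G) = G :=
  let: Game L R := G in
  let fix mapK s : map game_of_tree (map tree_of_game s) = s :=
    if s is x :: s' then congr2 cons (tree_of_gameK x) (mapK s') else erefl in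
  congr2 Game (mapK L) (mapK R).

HB.instance Definition _ := Equality.copy game (can_type tree_of_gameK).

Fixpoint gsize (G : game) : nat :=
  let: Game L R := G in (sumn (map gsize L) + sumn (map gsize R)).+1.

Lemma gsize_mem x s : x \in s -> gsize x <= sumn (map gsize s).
Proof.
elim: s => //= y s IH; rewrite inE => /predU1P[-> | /IH]; first exact: leq_addr.
by move/leq_trans; apply; apply: leq_addl.
Qed.

Lemma gsize_left x L R : x \in L -> gsize x < gsize (Game L R).
Proof. by move/gsize_mem => /= le_x; rewrite ltnS (leq_trans le_x) ?leq_addr. Qed.

Lemma gsize_right x L R : x \in R -> gsize x < gsize (Game L R).
Proof. by move/gsize_mem => /= le_x; rewrite ltnS (leq_trans le_x) ?leq_addl. Qed.

Lemma le_pairE GL GR HL HR : le_pair (Game GL GR) (Game HL HR) =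
  (all (fun gl => ~~ (le_pair gl (Game HL HR)).2) GL
   && all (fun hr => ~~ (le_pair (Game GL GR) hr).2) HR,
   all (fun hl => ~~ (le_pair (Game GL GR) hl).1) HL
   && all (fun gr => ~~ (le_pair gr (Game HL HR)).1) GR).
Proof. by []. Qed.

Lemma le_pair_snd G H : (le_pair G H).2 = game_le H G.
Proof.
move: {2}(gsize G + gsize H).+1 (ltnSn (gsize G + gsize H)) => n.
elim: n G H => [//|n IH] [GL GR] [HL HR] size_lt.
rewrite /game_le !le_pairE; congr (_ && _); apply: eq_in_all => x x_in; cbv beta.
- by rewrite IH //; have := gsize_left HR x_in; lia.
- by rewrite IH //; have := gsize_right GL x_in; lia.
Qed.

Lemma game_leE GL GR HL HR : game_le (Game GL GR) (Game HL HR) =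
  all (fun gl => ~~ game_le (Game HL HR) gl) GL
  && all (fun hr => ~~ game_le hr (Game GL GR)) HR.
Proof.
rewrite {1}/game_le le_pairE.
by congr (_ && _); apply: eq_all => x; rewrite le_pair_snd.
Qed.

Lemma game_le_refl G : game_le G G.
Proof.
move: {2}(gsize G).+1 (ltnSn (gsize G)) => n.
elim: n G => [//|n IH] [L R] size_lt.
rewrite game_leE; apply/andP; split; apply/allP => -[xL xR] x_in;
  rewrite game_leE negb_and.
- apply/orP; left; apply/allPn; exists (Game xL xR) => //; rewrite negbK IH //.
  by have := gsize_left R x_in; lia.
- apply/orP; right; apply/allPn; exists (Game xL xR) => //; rewrite negbK IH //.
  by have := gsize_right L x_in; lia.
Qed.

Lemma game_le_trans G H K : game_le G H -> game_le H K -> game_le G K.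
Proof.
move: {2}(gsize G + gsize H + gsize K).+1 (ltnSn (gsize G + gsize H + gsize K)).
move=> n; elim: n G H K => [//|n IH] [GL GR] [HL HR] [KL KR] size_lt.
rewrite !game_leE => /andP[GH_L GH_R] /andP[HK_L HK_R].
apply/andP; split; apply/allP => x x_in; apply/negP => x_le.
- have /allP/(_ x x_in)/negP := GH_L; apply.
  apply: (IH _ (Game KL KR)) x_le; last by rewrite game_leE HK_L HK_R.
  by have := gsize_left GR x_in; lia.
- have /allP/(_ x x_in)/negP := HK_R; apply.
  apply: (IH _ (Game GL GR)) x_le _; last by rewrite game_leE GH_L GH_R.
  by have := gsize_right KL x_in; lia.
Qed.

Lemma game_le_left_option G L R :
  G \in L -> ~~ game_le (Game L R) G.
Proof.
by move=> G_in; have := game_le_refl (Game L R); rewrite game_leE => /andP[/allP->].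
Qed.

Lemma game_le_right_option G L R :
  G \in R -> ~~ game_le G (Game L R).
Proof.
by move=> G_in; have := game_le_refl (Game L R); rewrite game_leE => /andP[_ /allP->].
Qed.

Lemma game_le_options GL GR HL HR :
  {in GL, forall gl, exists2 hl, hl \in HL & game_le gl hl} ->
  {in HR, forall hr, exists2 gr, gr \in GR & game_le gr hr} ->
  game_le (Game GL GR) (Game HL HR).
Proof.
move=> dom_L dom_R; rewrite game_leE.
apply/andP; split; apply/allP => x x_in; apply/negP => x_le.
- have [hl hl_in x_hl] := dom_L x x_in.
  by have/negP := game_le_left_option HR hl_in; apply; apply: game_le_trans x_hl.
- have [gr gr_in gr_x] := dom_R x x_in.
  by have/negP := game_le_right_option GL gr_in; apply; apply: game_le_trans gr_x _.
Qed.

Lemma game_eq_trans G H K : game_eq G H -> game_eq H K -> game_eq G K.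
Proof. by move=> [GH HG] [HK KH]; split; apply: game_le_trans; eassumption. Qed.

Definition options_equiv (s t : seq game) : Prop :=
  {in s, forall x, exists2 y, y \in t & game_eq x y} /\
  {in t, forall y, exists2 x, x \in s & game_eq x y}.

Lemma game_eq_options GL GR HL HR :
  options_equiv GL HL -> options_equiv GR HR -> game_eq (Game GL GR) (Game HL HR).
Proof.
move=> [GHL HGL] [GHR HGR]; split; apply: game_le_options.
- by move=> x /GHL[y y_in [le_xy _]]; exists y.
- by move=> y /HGR[x x_in [le_xy _]]; exists x.
- by move=> y /HGL[x x_in [_ le_yx]]; exists x.
- by move=> x /GHR[y y_in [_ le_yx]]; exists y.
Qed.

Lemma options_equiv_nseq m X Y : game_eq X Y -> options_equiv (nseq m.+1 X) [:: Y].
Proof.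
move=> eq_XY; split=> [x | y].
- by move/nseqP=> [-> _]; exists Y; rewrite ?mem_head.
- by rewrite inE => /eqP->; exists X; rewrite ?mem_nseq ?eqxx.
Qed.

Lemma map_in_const (T U : eqType) (f : T -> U) (y : U) (s : seq T) :
  {in s, forall x, f x = y} -> map f s = nseq (size s) y.
Proof.
move=> f_s; rewrite -(size_map f); apply/all_pred1P.
by rewrite all_map; apply/allP => x /f_s /= ->.
Qed.

Fixpoint isolated_game (t : tint) (m : nat) : game :=
  if m is m'.+1 then
    let options p :=
      if tint_eqb t (opp_tint p) then [::] else nseq m (isolated_game t m') in
    Game (options LeftP) (options RightP)
  else zero_game.

Lemma legal_options_const p c (V : seq nat) t (f : nat -> game) X :
    {in V, forall u, c u = t} -> {in V, forall v, f v = X} ->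
  [seq f v | v <- V & legal p c v] =
    if tint_eqb t (opp_tint p) then [::] else nseq (size V) X.
Proof.
move=> tint_V f_V.
rewrite (@eq_in_filter _ _ (fun=> ~~ tint_eqb t (opp_tint p))); last first.
  by move=> v /tint_V; rewrite /legal => ->.
by case: tint_eqb; rewrite ?filter_pred0 ?filter_predT // (map_in_const f_V).
Qed.

Section IndependentMove.

Variables (e : rel nat) (p : player) (V : seq nat) (c : nat -> tint) (v : nat).
Hypotheses (V_uniq : uniq V) (V_indep : {in V &, forall u w, ~~ e u w}) (vV : v \in V).

Lemma move_independent_verts : (move e p V c v).1 = rem v V.
Proof.
rewrite rem_filter //; apply: eq_in_filter => u uV /=.
by rewrite (negbTE (V_indep vV uV)) andbT.
Qed.

Lemma move_independent_tint : {in V, (move e p V c v).2 =1 c}.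
Proof. by move=> u uV /=; rewrite (negbTE (V_indep vV uV)). Qed.

End IndependentMove.

Lemma snort_auxS k e V c : snort_aux k.+1 e V c =
  Game [seq snort_aux k e (move e LeftP V c v).1 (move e LeftP V c v).2
          | v <- V & legal LeftP c v]
       [seq snort_aux k e (move e RightP V c v).1 (move e RightP V c v).2
          | v <- V & legal RightP c v].
Proof. by []. Qed.

Lemma snort_independent k e V c t :
    size V <= k -> uniq V -> {in V &, forall u w, ~~ e u w} ->
    {in V, forall u, c u = t} ->
  snort_aux k e V c = isolated_game t (size V).
Proof.
elim: k V c => [|k IH] [|v0 V] c // size_V V_uniq V_indep tint_V.
have option_eq p v : v \in v0 :: V ->
    snort_aux k e (move e p (v0 :: V) c v).1 (move e p (v0 :: V) c v).2 =
    isolated_game t (size V).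
  move=> vV; rewrite move_independent_verts // IH ?size_rem ?rem_uniq //.
  - by move=> u w /mem_rem uV /mem_rem wV; apply: V_indep.
  - by move=> u /mem_rem uV; rewrite move_independent_tint // tint_V.
rewrite snort_auxS (legal_options_const LeftP tint_V (option_eq LeftP)).
by rewrite (legal_options_const RightP tint_V (option_eq RightP)).
Qed.

Fixpoint blue_star_game (m : nat) : game :=
  if m is m'.+1 then
    Game (isolated_game BlueT m :: nseq m (blue_star_game m'))
         (nseq m (isolated_game Untinted m'))
  else Game [:: isolated_game BlueT 0] [::].

Section StarMove.

Variables (L : seq nat) (c : nat -> tint).
Hypotheses (L_uniq : uniq L) (centre_notin : 0 \notin L).
Hypotheses (centre_blue : c 0 = BlueT).
Hypothesis leaves_untinted : {in L, forall u, c u = Untinted}.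

Lemma leaf_neq0 u : u \in L -> u != 0.
Proof. by apply: contraTneq => ->. Qed.

Lemma star_leaves_independent : {in L &, forall u w, ~~ star_rel u w}.
Proof.
by move=> u w /leaf_neq0 u0 /leaf_neq0 w0; rewrite /star_rel (negbTE u0) (negbTE w0).
Qed.

Lemma star_rel_leaf_centre v : v \in L -> star_rel v 0.
Proof. by move/leaf_neq0 => v0; rewrite /star_rel v0 eqxx orbT. Qed.

Lemma rem_leaf_notin v : 0 \notin rem v L.
Proof. by apply: contra centre_notin; apply: mem_rem. Qed.

Lemma move_leaf_tint p v u : v \in L -> u \in L ->
  (move star_rel p (0 :: L) c v).2 u = c u.
Proof. by move=> vL uL /=; rewrite (negbTE (star_leaves_independent vL uL)). Qed.

Lemma snort_move_centre k : size L <= k ->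
  snort_aux k star_rel (move star_rel LeftP (0 :: L) c 0).1
                       (move star_rel LeftP (0 :: L) c 0).2 =
  isolated_game BlueT (size L).
Proof.
have -> : (move star_rel LeftP (0 :: L) c 0).1 = L.
  rewrite /= -[RHS]filter_predT; apply: eq_in_filter => u uL /=.
  by rewrite leaf_neq0 // leaves_untinted // andbF.
move=> size_L; apply: snort_independent => //; first exact: star_leaves_independent.
by move=> u uL /=; rewrite /star_rel eqxx leaf_neq0.
Qed.

Lemma move_left_leaf_verts v : v \in L ->
  (move star_rel LeftP (0 :: L) c v).1 = 0 :: rem v L.
Proof.
move=> vL; rewrite /= eq_sym leaf_neq0 // centre_blue andbF /=.
rewrite rem_filter //; congr (_ :: _); apply: eq_in_filter => u uL /=.
by rewrite (negbTE (star_leaves_independent vL uL)) andbT.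
Qed.

Lemma snort_move_right_leaf k v : v \in L -> (size L).-1 <= k ->
  snort_aux k star_rel (move star_rel RightP (0 :: L) c v).1
                       (move star_rel RightP (0 :: L) c v).2 =
  isolated_game Untinted (size L).-1.
Proof.
(* Right tints the blue centre red as well, which deletes it. *)
move=> vL; have -> : (move star_rel RightP (0 :: L) c v).1 = rem v L.
  rewrite /= star_rel_leaf_centre // centre_blue andbF.
  rewrite rem_filter //; apply: eq_in_filter => u uL /=.
  by rewrite (negbTE (star_leaves_independent vL uL)) andbT.
rewrite -(size_rem vL) => size_rem_L; apply: snort_independent; rewrite ?rem_uniq //.
- by move=> u w /mem_rem uL /mem_rem wL; apply: star_leaves_independent.
- by move=> u /mem_rem uL; rewrite move_leaf_tint ?leaves_untinted.
Qed.

End StarMove.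

Lemma snort_blue_star k L c :
    (size L).+1 <= k -> uniq L -> 0 \notin L -> c 0 = BlueT ->
    {in L, forall u, c u = Untinted} ->
  snort_aux k star_rel (0 :: L) c = blue_star_game (size L).
Proof.
elim: k L c => [//|k IH] L c; rewrite ltnS.
move=> size_L L_uniq centre_notin centre_blue leaves.
have left_opt v : v \in L ->
    snort_aux k star_rel (move star_rel LeftP (0 :: L) c v).1
                         (move star_rel LeftP (0 :: L) c v).2 =
    blue_star_game (size L).-1.
  move=> vL; rewrite move_left_leaf_verts // -(size_rem vL) IH ?rem_uniq //.
  - by rewrite size_rem // prednK // lt0n size_eq0; apply: contraTneq vL => ->.
  - exact: rem_leaf_notin.
  - by rewrite /= (star_rel_leaf_centre centre_notin vL).
  - by move=> u /mem_rem uL; rewrite (move_leaf_tint c centre_notin) ?leaves.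
have right_opt v (vL : v \in L) := snort_move_right_leaf L_uniq centre_notin
  centre_blue leaves vL (leq_trans (leq_pred _) size_L).
rewrite snort_auxS.
have -> : [seq v <- 0 :: L | legal LeftP c v] = 0 :: [seq v <- L | legal LeftP c v].
  by rewrite /= {1}/legal centre_blue.
have -> : [seq v <- 0 :: L | legal RightP c v] = [seq v <- L | legal RightP c v].
  by rewrite /= {1}/legal centre_blue.
rewrite map_cons snort_move_centre // (legal_options_const LeftP leaves left_opt).
rewrite (legal_options_const RightP leaves right_opt).
by case: (size L).
Qed.

Lemma snort_star_blue_centre n :
  snort star_rel (star_verts n) star_blue_centre = blue_star_game n.
Proof.
rewrite /snort /star_verts -{3}(size_iota 1 n).
apply: snort_blue_star; rewrite ?iota_uniq ?mem_iota //.
by move=> u; rewrite mem_iota /star_blue_centre; case: u.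
Qed.

Lemma isolated_blue_eq m : game_eq (isolated_game BlueT m) (nat_game m).
Proof.
elim: m => [|m IH]; first by [].
by apply: game_eq_options; [apply: options_equiv_nseq | by []].
Qed.

Lemma isolated_untinted_eq m :
  game_eq (isolated_game Untinted m) (if odd m then star_game else zero_game).
Proof.
elim: m => [|m IH]; first by [].
set P := if odd m then _ else _ in IH.
apply: (@game_eq_trans _ (Game [:: P] [:: P])).
  by apply: game_eq_options; apply: options_equiv_nseq.
by rewrite /P /=; case: (odd m).
Qed.

Lemma blue_star_le m : game_le (blue_star_game m) (nat_game m.+1).
Proof.
elim: m => [|m IH]; apply: game_le_options => // x.
  by rewrite inE => /eqP->; exists (nat_game 0); rewrite ?mem_head.
rewrite inE => /predU1P[-> | /nseqP[-> _]]; exists (nat_game m.+1); rewrite ?mem_head //.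
exact: (isolated_blue_eq m.+1).1.
Qed.

Theorem lemma2 (n : nat) :
  1 <= n ->
  game_eq (snort star_rel (star_verts n) star_blue_centre)
          (Game [:: nat_game n] [:: if odd n then zero_game else star_game]).
Proof.
case: n => [//|m] _; rewrite snort_star_blue_centre.
set P := if odd m.+1 then _ else _.
have [U_le_P P_le_U] : game_eq (isolated_game Untinted m) P.
  by rewrite /P /= if_neg; apply: isolated_untinted_eq.
have [B_le_n n_le_B] := isolated_blue_eq m.+1.
split; apply: game_le_options => x.
- rewrite inE => /predU1P[-> | /nseqP[-> _]]; exists (nat_game m.+1);
    rewrite ?mem_head //.
  exact: blue_star_le.
- by rewrite inE => /eqP->; exists (isolated_game Untinted m); rewrite ?mem_nseq ?eqxx.
- by rewrite inE => /eqP->; exists (isolated_game BlueT m.+1); rewrite ?mem_head.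
- by move/nseqP=> [-> _]; exists P; rewrite ?mem_head.
Qed.
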